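(* Let $n\ge 1$, let $X:\mathbb{C}^n\to\mathbb{C}^n$ be a nilpotent linear operator, and fix $i$ with $1\le i\le n$. Suppose $h$ is a Hessenberg function with $h(i)=i$, and suppose that the function $h'$ defined by $h'(j)=h(j)$ for $j\neq i$ and $h'(i)=i-1$ is also a Hessenberg function. Then $\mathcal{H}(X,h)=\mathcal{H}(X,h')$.
   Context: A (full) flag in $\mathbb{C}^n$ is a chain $V_1\subseteq V_2\subseteq\cdots\subseteq V_n=\mathbb{C}^n$ with $\dim V_k=k$; the flag variety is $GL_n(\mathbb{C})/B$ where $B$ is the group of invertible upper-triangular matrices, and $[g]$ denotes the flag whose $k$-dimensional subspace is spanned by the first $k$ columns of $g$. A Hessenberg function is a nondecreasing function $h:\{1,\dots,n\}\to\{1,\dots,n\}$. Its Hessenberg space is $H_h=\operatorname{span}\{E_{kl}: k\le h(l)\}$, where $E_{kl}$ is the matrix unit with $1$ in entry $(k,l)$ and $0$ elsewhere. The Hessenberg variety of a linear operator $X$ and $h$ is $\mathcal{H}(X,h)=\{[g]: g^{-1}Xg\in H_h\}$, equivalently the set of flags with $XV_k\subseteq V_{h(k)}$ for all $k$. *)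

(* The complex numbers are modelled as R[i] = complex R
   for R : realType (a model of the real numbers). *)
From HB Require Import structures.
From mathcomp Require Import all_boot all_order all_algebra.
From mathcomp Require Import complex.
From mathcomp Require Import reals.
Set Implicit Arguments. Unset Strict Implicit. Unset Printing Implicit Defensive.
Import Order.TTheory GRing.Theory Num.Theory.
Local Open Scope ring_scope.

(* Hessenberg function on {1,...,n} (1-indexed; values outside 1..n irrelevant). *)
Definition hessenberg_fun (n : nat) (h : nat -> nat) : Prop :=
  (forall j, (1 <= j <= n)%N -> (1 <= h j <= n)%N) /\
  (forall j k, (1 <= j)%N -> (j <= k)%N -> (k <= n)%N -> (h j <= h k)%N).

(* Hessenberg space H_h = span{E_kl : k <= h(l)} (1-indexed), as a predicate:
   entry (k,l) (0-indexed k, l) vanishes unless k+1 <= h(l+1). *)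
Definition in_hess_space (F : fieldType) (n : nat) (h : nat -> nat) (M : 'M[F]_n) : Prop :=
  forall k l : 'I_n, ~~ (k.+1 <= h l.+1)%N -> M k l = 0.

(* The flag [g]: V_k = span of the first k columns of g, i.e. the row space
   of the first k rows of g^T; <<_>>%MS is the canonical representative of
   a subspace, so flags are compared by equality. *)
Definition flag_of (F : fieldType) (n : nat) (g : 'M[F]_n) : nat -> 'M[F]_n :=
  fun k => <<(\matrix_(i < n, j < n) (if (i < k)%N then g j i else 0))>>%MS.

Definition hess_variety (F : fieldType) (n : nat) (X : 'M[F]_n) (h : nat -> nat)
  (V : nat -> 'M[F]_n) : Prop :=
  exists g : 'M[F]_n, g \in unitmx /\ flag_of g = V /\
    in_hess_space h (invmx g *m X *m g).

Definition nilpotent_mx (F : fieldType) (n : nat) (X : 'M[F]_n) : Prop :=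
  exists k : nat, X ^+ k = 0.

From HB Require Import structures.
From mathcomp Require Import all_boot all_order all_algebra.
From mathcomp Require Import complex.
From mathcomp Require Import reals.
From mathcomp Require Import zify.

Import Order.TTheory GRing.Theory Num.Theory.
Local Open Scope ring_scope.

(* With M = g^-1 X g in H_h, the inequalities h'(j) <= i - 1 for j < i and
   h(i) = i make M block upper triangular for the split {1..i} | {i+1..n}, with
   row i of the leading block vanishing left of the diagonal.  So the (i,i)
   entry of M^k is M_ii^k, and nilpotency of M forces M_ii = 0: this is the
   only entry allowed by H_h and not by H_h'.  Conversely H_h' is contained in
   H_h since h' <= h. *)

Lemma conj_unitmx_expr (R : comUnitRingType) n (g X : 'M[R]_n) k :
  g \in unitmx -> (invmx g *m X *m g) ^+ k = invmx g *m X ^+ k *m g.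
Proof.
move=> g_unit; elim: k => [|k IHk]; first by rewrite !expr0 mulmx1 mulVmx.
rewrite exprSr IHk exprSr -!mulmxE !mulmxA.
by rewrite -[_ *m g *m invmx g]mulmxA mulmxV // mulmx1.
Qed.

Lemma nilpotent_conj_unitmx (F : fieldType) n (g X : 'M[F]_n) :
  g \in unitmx -> nilpotent_mx X -> nilpotent_mx (invmx g *m X *m g).
Proof.
by move=> g_unit [k Xk0]; exists k; rewrite conj_unitmx_expr // Xk0 mulmx0 mul0mx.
Qed.

Section IsolatedDiagonalEntry.

Variables (R : pzRingType) (n : nat) (M : 'M[R]_n) (p : 'I_n).
Hypothesis M_block : forall r c : 'I_n, (c <= p < r)%N -> M r c = 0.
Hypothesis M_row : forall c : 'I_n, (c < p)%N -> M p c = 0.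

Lemma expmx_row_left_eq0 k (c : 'I_n) : (c < p)%N -> (M ^+ k) p c = 0.
Proof.
elim: k c => [|k IHk] c c_lt_p.
  by rewrite expr0 mxE; case: eqP => // p_eq_c; rewrite p_eq_c ltnn in c_lt_p.
rewrite exprSr -mulmxE mxE big1 // => j _.
have [j_lt_p | p_le_j] := ltnP j p; first by rewrite IHk // mul0r.
rewrite leq_eqVlt in p_le_j; case/orP: p_le_j => [/eqP/val_inj <- | p_lt_j].
  by rewrite M_row // mulr0.
by rewrite M_block ?mulr0 // (ltnW c_lt_p).
Qed.

Lemma expmx_diag_entry k : (M ^+ k) p p = M p p ^+ k.
Proof.
elim: k => [|k IHk]; first by rewrite !expr0 mxE eqxx.
rewrite exprSr -mulmxE mxE (bigD1 p) //= IHk big1 ?addr0 -?exprSr // => j j_neq_p.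
have [j_lt_p | p_lt_j | /val_inj j_eq_p] := ltngtP j p.
- by rewrite expmx_row_left_eq0 // mul0r.
- by rewrite M_block ?mulr0 // leqnn.
- by rewrite j_eq_p eqxx in j_neq_p.
Qed.

End IsolatedDiagonalEntry.

Lemma nilpotent_isolated_diag_eq0 (F : fieldType) n (M : 'M[F]_n) (p : 'I_n) :
  (forall r c : 'I_n, (c <= p < r)%N -> M r c = 0) ->
  (forall c : 'I_n, (c < p)%N -> M p c = 0) ->
  nilpotent_mx M -> M p p = 0.
Proof.
move=> M_block M_row [k Mk0]; apply/eqP.
have : M p p ^+ k == 0 by rewrite -expmx_diag_entry // Mk0 mxE.
by rewrite expf_eq0 => /andP[].
Qed.

Lemma in_hess_space_le (F : fieldType) n (h1 h2 : nat -> nat) (M : 'M[F]_n) :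
  (forall j, (h1 j <= h2 j)%N) -> in_hess_space h1 M -> in_hess_space h2 M.
Proof.
move=> h12 h1M k l k_gt; apply: h1M; apply: contra k_gt => k_le.
exact: leq_trans k_le (h12 _).
Qed.

Lemma hess_variety_sub (F : fieldType) n (X : 'M[F]_n) (h1 h2 : nat -> nat) V :
  (forall M : 'M[F]_n, nilpotent_mx M -> in_hess_space h1 M -> in_hess_space h2 M) ->
  nilpotent_mx X -> hess_variety X h1 V -> hess_variety X h2 V.
Proof.
move=> h12 X_nil [g [g_unit [flag_g h1_g]]]; exists g; split; [done | split=> //].
by apply: h12 h1_g; apply: nilpotent_conj_unitmx.
Qed.

Section LowerHessenbergValue.

Context {n i : nat} {h h' : nat -> nat}.
Hypotheses (i_gt0 : (0 < i)%N) (i_le_n : (i <= n)%N) (h_i : h i = i).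
Hypotheses (h'_eq : forall j, j != i -> h' j = h j) (h'_i : h' i = i.-1).
Hypothesis h'_hess : hessenberg_fun n h'.

Lemma h'_le_h j : (h' j <= h j)%N.
Proof.
have [->|j_ne_i] := eqVneq j i; first by rewrite h'_i h_i leq_pred.
by rewrite h'_eq.
Qed.

Lemma h_lt_i j : (0 < j < i)%N -> (h j < i)%N.
Proof.
case/andP=> j_gt0 j_lt_i; rewrite -h'_eq ?ltn_eqF //.
have := h'_hess.2 j i j_gt0 (ltnW j_lt_i) i_le_n.
by rewrite h'_i; lia.
Qed.

Let p_lt_n : (i.-1 < n)%N. Proof. by rewrite prednK. Qed.
(* [p] is the index [i] of the 1-indexed convention of [in_hess_space]. *)
Let p : 'I_n := Ordinal p_lt_n.

Context {F : fieldType} {M : 'M[F]_n}.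
Hypothesis h_M : in_hess_space h M.

Lemma hess_block_zero (r c : 'I_n) : (c <= p < r)%N -> M r c = 0.
Proof.
case/andP=> /= c_le_p p_lt_r; apply: h_M; rewrite -ltnNge /=.
have [-> | c_ne_i] := eqVneq c.+1 i; first by rewrite h_i; lia.
have : (h c.+1 < i)%N by apply: h_lt_i; lia.
lia.
Qed.

Lemma hess_row_zero (c : 'I_n) : (c < p)%N -> M p c = 0.
Proof.
move=> /= c_lt_p; apply: h_M; rewrite -ltnNge /= prednK //.
by apply: h_lt_i; lia.
Qed.

Lemma in_hess_space_lower : nilpotent_mx M -> in_hess_space h' M.
Proof.
move=> M_nil k l; have [l_i | l_ne_i] := eqVneq l.+1 i; last first.
  by rewrite h'_eq //; apply: h_M.
rewrite l_i h'_i -ltnNge prednK // => i_le_k.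
have [k_i | k_ne_i] := eqVneq k.+1 i; last by apply: h_M; rewrite l_i h_i; lia.
have [-> ->] : k = p /\ l = p by split; apply: val_inj => /=; lia.
exact: nilpotent_isolated_diag_eq0 hess_block_zero hess_row_zero M_nil.
Qed.

End LowerHessenbergValue.

Theorem mainTheorem1 (R : realType) (n : nat) (X : 'M[R[i]]_n) (i : nat)
  (h h' : nat -> nat) :
  (1 <= n)%N ->
  nilpotent_mx X ->
  (1 <= i <= n)%N ->
  hessenberg_fun n h ->
  h i = i ->
  (forall j, j != i -> h' j = h j) ->
  h' i = i.-1 ->
  hessenberg_fun n h' ->
  forall V : nat -> 'M[R[i]]_n, hess_variety X h V <-> hess_variety X h' V.
Proof.
move=> _ X_nil /andP[i_gt0 i_le_n] _ h_i h'_eq h'_i h'_hess V.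
split; apply: hess_variety_sub X_nil => M M_nil h_M.
- exact: (in_hess_space_lower i_gt0 i_le_n h_i h'_eq h'_i h'_hess h_M M_nil).
- exact: in_hess_space_le (h'_le_h h_i h'_eq h'_i) h_M.
Qed.
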